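(* In the one-counter game $\mathcal{G}$ defined below, for every $j\in\{1,\dots,2^{2^n}\}$, every $d\in\Delta$ and every $i\in\mathbb{N}$ such that the configuration $C^w_i$ exists, $\mathrm{Verifier}$ has a strategy from the configuration $((j,d),i)$ guaranteeing that the play reaches the state $s'_F$ if and only if $C^w_i(j)=d$. In particular, $((1,(q_F,a)),i)$ is winning for $\mathrm{Verifier}$ iff $C^w_i(1)=(q_F,a)$, i.e. iff $\mathcal{T}$ accepts $w$ after $i$ steps.
   Context: Let $\mathcal{T}=(Q,q_0,\Sigma,\delta,q_F)$ be a deterministic Turing machine with tape alphabet $\Sigma=\{0,1,\#,a,r\}$ ($\#$ blank; $\mathcal{T}$ accepts immediately on reading $a$ and rejects immediately on reading $r$), transition function $\delta:Q\times\Sigma\to Q\times\Sigma\times\{\mathrm{Left},\mathrm{Right}\}$ with components $\delta_1,\delta_2,\delta_3$, and accepting state $q_F$. Let $w=w_1\dots w_{|w|}$ be an input, $n=|w|^k$, and assume $\mathcal{T}$ uses only cells $1,\dots,2^{2^n}$, with extra cells $0$ and $2^{2^n}+1$ initially holding $a$, the head initially on cell 1, and that if $\mathcal{T}$ halts accepting it does so in state $q_F$ with the head on cell 1 holding $a$. Let $\Delta=\Sigma\cup(Q\times\Sigma)$. The run of $\mathcal{T}$ on $w$ is the sequence of configurations $C^w_0C^w_1\dots$, each $C^w_i\in\Delta^{2^{2^n}+2}$ (indexed $0,\dots,2^{2^n}+1$) containing exactly one element of $Q\times\Sigma$ marking the state and head position; $C^w_0=a\,(q_0,w_1)\,w_2\dots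 w_{|w|}\,\#\dots\#\,a$; $C^w_i(j)$ is the $j$-th element. For $d\in\Delta$, $\mathrm{Pre}(d)$ is the set of triples: all $(d_1,d_2,d_3)\in\Sigma^3$ with $d_2=d$; all $((q,b),d_2,d_3)\in(Q\times\Sigma)\times\Sigma^2$ with either $d=(\delta_1(q,b),d_2)$ and $\delta_3(q,b)=\mathrm{Right}$, or $d=d_2$ and $\delta_3(q,b)\neq\mathrm{Right}$; all $(d_1,d_2,(q,b))\in\Sigma^2\times(Q\times\Sigma)$ with either $d=(\delta_1(q,b),d_2)$ and $\delta_3(q,b)=\mathrm{Left}$, or $d=d_2$ and $\delta_3(q,b)\neq\mathrm{Left}$; all $(d_1,(q,b),d_3)\in\Sigma\times(Q\times\Sigma)\times\Sigma$ with $d=\delta_2(q,b)$. The OCG $\mathcal{G}$ has players $\mathrm{Verifier},\mathrm{Falsifier}$, states $S'=(\{0,\dots,2^{2^n}+1\}\times(\Delta\cup\Delta^3))\cup\{s'_0,s'_z,s'_r,s'_F\}$, with $\mathrm{Verifier}$ controlling $(\{0,\dots,2^{2^n}+1\}\times\Delta)\cup\{s'_0\}$ and $\mathrm{Falsifier}$ the rest. Its transitions (state, weight, state) are exactly: $(s'_0,1,s'_0)$; $(s'_0,0,(1,(q_F,a)))$; $((j,d),0,(j,(d_1,d_2,d_3)))$ for $j\in\{1,\dots,2^{2^n}\}$, $(d_1,d_2,d_3)\in\mathrm{Pre}(d)$; for $j\in\{0,2^{2^n}+1\}$: $((j,a),0,s'_F)$ and $((j,d),0,s'_r)$ for $d\neq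 a$; $((j,d),0,s'_z)$ for all $(j,d)$ with $C^w_0(j)=d$; $(s'_z,0,s'_F)$; $(s'_z,-1,s'_r)$; and for $j\in\{1,\dots,2^{2^n}\}$ and $d_1,d_2,d_3\in\Delta$: $((j,(d_1,d_2,d_3)),-1,(j-1,d_1))$, $((j,(d_1,d_2,d_3)),-1,(j,d_2))$, $((j,(d_1,d_2,d_3)),-1,(j+1,d_3))$. Configurations are (state, counter value) pairs with counter in $\mathbb{N}$; a transition with weight $-1$ is disabled at counter value 0; plays are maximal sequences of configurations following enabled transitions (a play with no enabled move ends). A configuration is winning for $\mathrm{Verifier}$ if he has a strategy ensuring every compatible play visits $s'_F$. *)

From mathcomp Require Import all_boot.
Set Implicit Arguments. Unset Strict Implicit. Unset Printing Implicit Defensive.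

(* Tape alphabet Sigma = {0,1,#,a,r} *)
Inductive Sym := S0 | S1 | Sb | Sa | Sr .
Inductive Dir := DLeft | DRight.

Definition Delta (Q : Type) := (Sym + (Q * Sym))%type.

Record mconf (Q : Type) := MConf { mstate : Q; mhead : nat; mtape : nat -> Sym }.

Definition sym_of_bool (b : bool) : Sym := if b then S1 else S0.

Section TM.
Variables (Q : Type) (q0 qF : Q) (delta : Q -> Sym -> Q * Sym * Dir).
Variables (w : seq bool) (N : nat).  (* N = number of usable cells 1..N *)

Definition delta1 q b := (delta q b).1.1.
Definition delta2 q b := (delta q b).1.2.
Definition delta3 q b := (delta q b).2.

(* initial tape: a w_1 ... w_|w| # ... # a  on cells 0 .. N+1 *)
Definition tape0 (j : nat) : Sym :=
  if j == 0 then Sa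
  else if j <= size w then sym_of_bool (nth false w j.-1)
  else if j == N.+1 then Sa else Sb.

Definition minit : mconf Q := MConf q0 1 tape0.

Definition mstep (m : mconf Q) : option (mconf Q) :=
  match mtape m (mhead m) with
  | Sa | Sr => None
  | b => let: (q', b', dir) := delta (mstate m) b in
         Some (MConf q' (if dir is DLeft then (mhead m).-1 else (mhead m).+1)
                        (fun j => if j == mhead m then b' else mtape m j))
  end.

Definition mrun (i : nat) : option (mconf Q) := iter i (fun o => obind mstep o) (Some minit).

Definition accepts_at (i : nat) : Prop :=
  exists m, mrun i = Some m /\ mtape m (mhead m) = Sa.

Definition conf_of (m : mconf Q) : nat -> Delta Q :=
  fun j => if j == mhead m then inr (mstate m, mtape m j) else inl (mtape m j).

(* C^w_i (None if the run has halted before step i) *)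
Definition Cw (i : nat) : option (nat -> Delta Q) := omap conf_of (mrun i).
Definition C0 : nat -> Delta Q := conf_of minit.

Definition Pre (d : Delta Q) (t : Delta Q * Delta Q * Delta Q) : Prop :=
  match t with
  | (inl _, inl d2, inl _) => d = inl d2
  | (inr (q, b), inl d2, inl _) =>
      (d = inr (delta1 q b, d2) /\ delta3 q b = DRight) \/
      (d = inl d2 /\ delta3 q b <> DRight)
  | (inl _, inl d2, inr (q, b)) =>
      (d = inr (delta1 q b, d2) /\ delta3 q b = DLeft) \/
      (d = inl d2 /\ delta3 q b <> DLeft)
  | (inl _, inr (q, b), inl _) => d = inl (delta2 q b)
  | _ => False
  end.

Inductive gstate :=
  | Cell of nat & Delta Q
  | Trip of nat & (Delta Q * Delta Q * Delta Q)
  | s0' | sz' | sr' | sF'.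

Inductive weight := WDec | WZero | WInc.

Definition isVerifier (s : gstate) : bool :=
  match s with Cell _ _ | s0' => true | _ => false end.

Inductive edge : gstate -> weight -> gstate -> Prop :=
  | e_s0_loop : edge s0' WInc s0'
  | e_s0_start : edge s0' WZero (Cell 1 (inr (qF, Sa)))
  | e_pre j d t : 1 <= j <= N -> Pre d t -> edge (Cell j d) WZero (Trip j t)
  | e_bnd_acc j : (j = 0 \/ j = N.+1) -> edge (Cell j (inl Sa)) WZero sF'
  | e_bnd_rej j d : (j = 0 \/ j = N.+1) -> d <> inl Sa -> edge (Cell j d) WZero sr'
  | e_init j d : j <= N.+1 -> C0 j = d -> edge (Cell j d) WZero sz'
  | e_z_F : edge sz' WZero sF'
  | e_z_r : edge sz' WDec sr'
  | e_left j x y z : 1 <= j <= N -> edge (Trip j (x, y, z)) WDec (Cell j.-1 x)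
  | e_mid j x y z : 1 <= j <= N -> edge (Trip j (x, y, z)) WDec (Cell j y)
  | e_right j x y z : 1 <= j <= N -> edge (Trip j (x, y, z)) WDec (Cell j.+1 z).

Definition upd (wt : weight) (c c' : nat) : Prop :=
  match wt with
  | WInc => c' = c.+1
  | WZero => c' = c
  | WDec => 0 < c /\ c' = c.-1
  end.

Definition gconf := (gstate * nat)%type.

Definition gmove (x y : gconf) : Prop := exists wt, edge x.1 wt y.1 /\ upd wt x.2 y.2.

Definition strategy := seq gconf -> gconf -> gconf.

Definition valid_strategy (sg : strategy) : Prop :=
  forall past x, isVerifier x.1 -> (exists y, gmove x y) -> gmove x (sg past x).

Definition follows (sg : strategy) (pi : nat -> gconf) (k : nat) : Prop :=
  gmove (pi k) (pi k.+1) /\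
  (isVerifier (pi k).1 -> pi k.+1 = sg [seq pi i | i <- iota 0 k] (pi k)).

Definition inf_play (sg : strategy) (c : gconf) (pi : nat -> gconf) : Prop :=
  pi 0 = c /\ forall k, follows sg pi k.

Definition fin_play (sg : strategy) (c : gconf) (n : nat) (pi : nat -> gconf) : Prop :=
  pi 0 = c /\ (forall k, k < n -> follows sg pi k) /\ ~ (exists y, gmove (pi n) y).

Definition VerifierWins (c : gconf) : Prop :=
  exists sg : strategy, valid_strategy sg /\
    (forall pi, inf_play sg c pi -> exists k, (pi k).1 = sF') /\
    (forall n pi, fin_play sg c n pi -> exists k, k <= n /\ (pi k).1 = sF').

End TM.

From mathcomp Require Import all_boot zify.
From Stdlib Require Import Classical ClassicalEpsilon Wf_nat.
Set Implicit Arguments. Unset Strict Implicit. Unset Printing Implicit Defensive.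

(* From [(Cell j d, i)] Verifier claims [C^w_i(j) = d].  He supports the claim
   with a triple of [Pre d] that he claims to be cells [j-1], [j], [j+1] of
   [C^w_(i-1)], and Falsifier challenges one of them with the counter
   decremented; at counter [0] the claim is checked against [C^w_0] through
   [s'_z], and at the boundary cells against [a].  [Pre] is exactly the local
   rule by which one step of the machine computes cell [j] from cells [j-1],
   [j], [j+1].  Hence the true claims form a region in which Verifier can keep
   the play, and the false claims one in which Falsifier can; since the counter
   only decreases after leaving [s'_0], every play is finite, ends in [s'_F]
   from the first region and never reaches it from the second. *)

Lemma conf_of_offhead Q (m : mconf Q) j : j <> mhead m -> conf_of m j = inl (mtape m j).
Proof. by rewrite /conf_of; case: eqP. Qed.

Lemma Pre_mstep Q (delta : Q -> Sym -> Q * Sym * Dir) (m m' : mconf Q) j d :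
  0 < mhead m -> 0 < j -> mstep delta m = Some m' ->
  Pre delta d (conf_of m j.-1, conf_of m j, conf_of m j.+1) <-> d = conf_of m' j.
Proof.
case: m => q h tp /= h_gt0 j_gt0; rewrite /mstep /conf_of /=.
case Eb: (tp h) => [| | | |] //;
  case E: (delta q _) => [[q' b'] dir] [<-] /=;
  case: dir E => E; do ! case: eqP => ?; try lia; subst;
  rewrite /= /delta1 /delta2 /delta3 ?Eb ?E /=; intuition congruence.
Qed.

Lemma Pre_inl_l Q (delta : Q -> Sym -> Q * Sym * Dir) d s1 s2 y z :
  Pre delta d (inl s1, y, z) <-> Pre delta d (inl s2, y, z).
Proof. by case: y => [?|[??]]; case: z => [?|[??]]. Qed.

Lemma Pre_inl_r Q (delta : Q -> Sym -> Q * Sym * Dir) d s1 s2 x y :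
  Pre delta d (x, y, inl s1) <-> Pre delta d (x, y, inl s2).
Proof. by case: x => [?|[??]]; case: y => [?|[??]]. Qed.

Section Game.
Variables (Q : Type) (q0 qF : Q) (delta : Q -> Sym -> Q * Sym * Dir) (w : seq bool) (N : nat).

Local Notation run := (mrun q0 delta w N).
Local Notation cw := (Cw q0 delta w N).
Local Notation gmv := (gmove q0 qF delta w N).
Local Notation wins := (VerifierWins q0 qF delta w N).
Local Notation follows := (follows q0 qF delta w N).

Lemma Cw_Some c C : cw c = Some C -> exists m, run c = Some m /\ C = conf_of m.
Proof. by rewrite /Cw; case: (run c) => //= m [<-]; exists m. Qed.

Lemma mrunS_Some c m' :
  run c.+1 = Some m' -> exists m, run c = Some m /\ mstep delta m = Some m'.
Proof. by rewrite /mrun iterS -/(mrun _ _ _ _ _); case: (run c) => //= m E; exists m. Qed.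

Lemma gmove_sF x y : gmv x y -> x.1 <> sF' Q.
Proof. by case: x y => s c [s' c'] [wt [/= E _]] e; subst s; inversion E. Qed.

(* Every move other than the loop at s'_0 decreases the potential, so plays
   that avoid s'_0 are finite. *)
Definition potential (x : gconf Q) : nat :=
  match x with
  | (Cell _ _, c) => 2 * c + 3
  | (Trip _ _, c) => 2 * c + 2
  | (sz', _) => 1
  | _ => 0
  end.

Lemma potential_gmove x y : gmv x y -> x.1 <> s0' Q -> potential y < potential x.
Proof.
case: x y => s c [s' c'] [wt [/= E U]] ns.
by case: E U ns => /= *; try lia.
Qed.

Definition choose_move (P : gconf Q -> Prop) (x : gconf Q) : gconf Q :=
  epsilon (inhabits (sF' Q, 0))
    (fun y => gmv x y /\ ((exists y', gmv x y' /\ P y') -> P y)).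

Lemma choose_moveP P x : (exists y, gmv x y) ->
  gmv x (choose_move P x) /\ ((exists y, gmv x y /\ P y) -> P (choose_move P x)).
Proof.
move=> [y0 hy0].
apply: (epsilon_spec (inhabits (sF' Q, 0))
  (fun y => gmv x y /\ ((exists y', gmv x y' /\ P y') -> P y))).
case: (classic (exists y, gmv x y /\ P y)) => [[y [hy Py]]|hnP].
  by exists y.
by exists y0; split=> // /hnP.
Qed.

Lemma VerifierWins_of_invariant (P : gconf Q -> Prop) :
  (forall x, P x -> x.1 <> s0' Q) ->
  (forall x, P x -> isVerifier x.1 -> x.1 <> sF' Q -> exists y, gmv x y /\ P y) ->
  (forall x, P x -> ~~ isVerifier x.1 -> x.1 <> sF' Q ->
     (exists y, gmv x y) /\ forall y, gmv x y -> P y) ->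
  forall c, P c -> wins c.
Proof.
move=> P_s0 P_ver P_fal c Pc.
pose sg : strategy Q := fun _ => choose_move P.
have P_follows pi k : follows sg pi k -> P (pi k) -> P (pi k.+1).
  move=> [hm hsg] hP; have nF := gmove_sF hm.
  case hV : (isVerifier (pi k).1); last exact: (P_fal _ hP (negbT hV) nF).2.
  by rewrite (hsg hV); apply: (choose_moveP P (ex_intro _ _ hm)).2; apply: P_ver.
exists sg; split; [|split].
- by move=> past x _ /(choose_moveP P) [].
- move=> pi [pi0 hpi]; exfalso.
  have bound k : P (pi k) /\ potential (pi k) + k <= potential c.
    elim: k => [|k [hP hk]]; first by rewrite pi0 addn0.
    split; first exact: P_follows (hpi k) hP.
    by have := potential_gmove (hpi k).1 (P_s0 _ hP); lia.
  by have := (bound (potential c).+1).2; lia.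
- move=> n pi [pi0 [hpi stuck]]; apply: NNPP => noF.
  have hP k : k <= n -> P (pi k).
    by elim: k => [|k IH] hk; [rewrite pi0 | exact: P_follows (hpi k hk) (IH (ltnW hk))].
  have nF : (pi n).1 <> sF' Q by move=> e; apply: noF; exists n.
  apply: stuck; case hV : (isVerifier (pi n).1).
    by have [y [hy _]] := P_ver _ (hP n (leqnn n)) hV nF; exists y.
  exact: (P_fal _ (hP n (leqnn n)) (negbT hV) nF).1.
Qed.

Section CounterPlay.
Variables (sg : strategy Q) (L : gconf Q -> Prop) (c : gconf Q).

(* The play of [sg] against a Falsifier who stays in [L] when he can, paired
   with the history that [sg] is fed. *)
Fixpoint counter_play n : seq (gconf Q) * gconf Q :=
  if n is n'.+1 then
    let: hx := counter_play n' in
    (rcons hx.1 hx.2, if isVerifier hx.2.1 then sg hx.1 hx.2 else choose_move L hx.2)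
  else ([::], c).

Local Notation pi n := (counter_play n).2.

Lemma counter_play_history n : (counter_play n).1 = [seq pi i | i <- iota 0 n].
Proof.
elim: n => [|n IH] //.
have -> : iota 0 n.+1 = iota 0 n ++ [:: n] by rewrite -addn1 iotaD.
by rewrite map_cat cats1 -IH.
Qed.

Hypothesis sg_valid : valid_strategy q0 qF delta w N sg.
Hypothesis L_s0F : forall x, L x -> x.1 <> s0' Q /\ x.1 <> sF' Q.
Hypothesis L_ver : forall x, L x -> isVerifier x.1 -> forall y, gmv x y -> L y.
Hypothesis L_fal : forall x, L x -> ~~ isVerifier x.1 ->
  (exists y, gmv x y) -> exists y, gmv x y /\ L y.
Hypothesis Lc : L c.

Lemma counter_play_invariant k : (forall k', k' < k -> exists y, gmv (pi k') y) ->
  [/\ L (pi k), potential (pi k) + k <= potential c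
    & forall k', k' < k -> follows sg (fun n => pi n) k'].
Proof.
elim: k => [|k IH] hmv; first by split=> //; rewrite addn0.
have [hL hpot hfol] := IH (fun k' hk' => hmv k' (ltnW hk')).
have [y hy] := hmv k (ltnSn k).
have [fk Lk] : follows sg (fun n => pi n) k /\ L (pi k.+1).
  rewrite /follows /= -counter_play_history.
  case hV : (isVerifier (pi k).1).
    have g := sg_valid (counter_play k).1 hV (ex_intro _ y hy).
    by split; [split | exact: L_ver hL hV _ g].
  have [g Lg] := choose_moveP L (ex_intro _ y hy).
  by split; [split | exact: Lg (L_fal hL (negbT hV) (ex_intro _ y hy))].
split=> //; first by have := potential_gmove fk.1 (L_s0F hL).1; lia.
by move=> k'; rewrite ltnS leq_eqVlt => /predU1P [->|/hfol].
Qed.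

Lemma counter_play_stuck :
  exists n, (forall k, k < n -> exists y, gmv (pi k) y) /\ ~ exists y, gmv (pi n) y.
Proof.
have some_stuck : exists n, ~ exists y, gmv (pi n) y.
  apply: NNPP => moves.
  have hmv k : exists y, gmv (pi k) y by apply: NNPP => h; apply: moves; exists k.
  by have [_ + _] := counter_play_invariant (k := (potential c).+1) (fun k _ => hmv k); lia.
have [n [[stuck least] _]] :=
  dec_inh_nat_subset_has_unique_least_element _ (fun n => classic _) some_stuck.
exists n; split=> // k hk; apply: NNPP => stuck_k.
by have := least k stuck_k; lia.
Qed.

End CounterPlay.

Lemma not_VerifierWins_of_invariant (L : gconf Q -> Prop) :
  (forall x, L x -> x.1 <> s0' Q /\ x.1 <> sF' Q) ->
  (forall x, L x -> isVerifier x.1 -> forall y, gmv x y -> L y) ->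
  (forall x, L x -> ~~ isVerifier x.1 -> (exists y, gmv x y) -> exists y, gmv x y /\ L y) ->
  forall c, L c -> ~ wins c.
Proof.
move=> L_s0F L_ver L_fal c Lc [sg [sg_valid [_ fin_wins]]].
have [n [hmv stuck]] := counter_play_stuck sg_valid L_s0F L_ver L_fal Lc.
have [_ _ hfol] := counter_play_invariant sg_valid L_s0F L_ver L_fal Lc hmv.
have [k [hk kF]] := fin_wins n _ (conj erefl (conj hfol stuck)).
have [Lk _ _] := counter_play_invariant sg_valid L_s0F L_ver L_fal Lc
  (fun k' hk' => hmv k' (leq_trans hk' hk)).
exact: (L_s0F _ Lk).2 kF.
Qed.

Hypothesis head_inside : forall i m, run i = Some m -> 1 <= mhead m <= N.

Lemma N_gt0 : 0 < N.
Proof. by have /andP [+ +] := @head_inside 0 (minit q0 w N) erefl => /=; lia. Qed.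

(* What Verifier can certify from [(Cell j x, c)]: inside the tape, that [x]
   is cell [j] of [C^w_c]; on a boundary cell he wins at once through [s'_F]
   if [x] is [a], or through [s'_z] if the counter is [0] and [x] is the
   initial content of the cell. *)
Definition true_cell (c j : nat) (x : Delta Q) : Prop :=
  (1 <= j <= N /\ exists C, cw c = Some C /\ C j = x) \/
  ((j = 0 \/ j = N.+1) /\ (x = inl Sa \/ (c = 0 /\ C0 q0 w N j = x))).

Lemma true_cell_inside c j x m :
  1 <= j <= N -> run c = Some m -> true_cell c j x -> x = conf_of m j.
Proof.
move=> hj hr [[_ [C [E <-]]]|[[e|e] _]]; try lia.
by move: E; rewrite /Cw hr => -[<-].
Qed.

Lemma true_cell_boundary c j x :
  (j = 0 \/ j = N.+1) -> true_cell c j x -> exists s, x = inl s.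
Proof.
move=> hj [[hj' _]|[_ [->|[_ <-]]]]; first lia; first by exists Sa.
rewrite /C0 conf_of_offhead /=; first by exists (tape0 w N j).
by have := N_gt0; case: hj => -> /=; lia.
Qed.

Lemma true_cells_Pre c m' j x y z d :
  run c.+1 = Some m' -> 1 <= j <= N ->
  true_cell c j.-1 x -> true_cell c j y -> true_cell c j.+1 z ->
  Pre delta d (x, y, z) -> conf_of m' j = d.
Proof.
move=> hr hj tx ty tz.
have [m [hm hs]] := mrunS_Some hr.
have hh := head_inside hm.
rewrite (true_cell_inside hj hm ty) => P; symmetry; apply/(Pre_mstep _ _ _ hs); try lia.
have P1 : Pre delta d (conf_of m j.-1, conf_of m j, z).
  case: (ltnP 1 j) => hj1.
    by rewrite -(true_cell_inside _ hm tx) //; lia.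
  have [s ex] : exists s, x = inl s by apply: (true_cell_boundary _ tx); lia.
  rewrite ex in P; rewrite conf_of_offhead; last lia.
  exact: (Pre_inl_l _ _ _ _ _ _).1 P.
case: (ltnP j N) => hjN.
  by rewrite -(true_cell_inside _ hm tz) //; lia.
have [s ez] : exists s, z = inl s by apply: (true_cell_boundary _ tz); lia.
rewrite ez in P1; rewrite (@conf_of_offhead _ m j.+1); last lia.
exact: (Pre_inl_r _ _ _ _ _ _).1 P1.
Qed.

Lemma Pre_true_cells c m' j :
  run c.+1 = Some m' -> 1 <= j <= N -> exists x y z,
    [/\ Pre delta (conf_of m' j) (x, y, z),
        true_cell c j.-1 x, true_cell c j y & true_cell c j.+1 z].
Proof.
move=> hr hj.
have [m [hm hs]] := mrunS_Some hr.
have hh := head_inside hm.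
have hcw : cw c = Some (conf_of m) by rewrite /Cw hm.
have P0 : Pre delta (conf_of m' j) (conf_of m j.-1, conf_of m j, conf_of m j.+1).
  by apply/(Pre_mstep _ _ _ hs); try lia.
(* Outside the tape the true cell is [a], which [Pre] does not tell apart from
   the actual (non-head) content. *)
exists (if j == 1 then inl Sa else conf_of m j.-1), (conf_of m j),
       (if j == N then inl Sa else conf_of m j.+1); split.
- have P1 : Pre delta (conf_of m' j)
      (if j == 1 then inl Sa else conf_of m j.-1, conf_of m j, conf_of m j.+1).
    case: eqP => e1 //.
    rewrite (@conf_of_offhead _ m j.-1) in P0; last lia.
    exact: (Pre_inl_l _ _ _ _ _ _).1 P0.
  case: (@eqP _ j N) => e2 //.
  rewrite (@conf_of_offhead _ m j.+1) in P1; last lia.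
  exact: (Pre_inl_r _ _ _ _ _ _).1 P1.
- case: eqP => e1; first by right; split; [left; lia | left].
  by left; split; [lia | exists (conf_of m)].
- by left; split; [lia | exists (conf_of m)].
- case: eqP => e1; first by right; split; [right; lia | left].
  by left; split; [lia | exists (conf_of m)].
Qed.

Lemma edge_Cell_inv j d wt s : edge q0 qF delta w N (Cell j d) wt s ->
  [\/ exists t, [/\ wt = WZero, s = Trip j t, 1 <= j <= N & Pre delta d t],
      [/\ wt = WZero, s = sF' Q, j = 0 \/ j = N.+1 & d = inl Sa],
      [/\ wt = WZero, s = sr' Q & d <> inl Sa]
    | [/\ wt = WZero, s = sz' Q, j <= N.+1 & C0 q0 w N j = d]].
Proof.
move=> E; inversion E; subst;
  first [by constructor 1; eexists | by constructor 2 | by constructor 3 | by constructor 4].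
Qed.

Lemma edge_Trip_inv j t wt s : edge q0 qF delta w N (Trip j t) wt s ->
  [/\ wt = WDec, 1 <= j <= N & [\/ s = Cell j.-1 t.1.1, s = Cell j t.1.2 | s = Cell j.+1 t.2]].
Proof.
move=> E; inversion E; subst; split=> //;
  first [by constructor 1 | by constructor 2 | by constructor 3].
Qed.

Lemma edge_sz_inv wt s : edge q0 qF delta w N (sz' Q) wt s ->
  (wt = WZero /\ s = sF' Q) \/ (wt = WDec /\ s = sr' Q).
Proof. by move=> E; inversion E; [left | right]. Qed.

(* The counter value is the index [i] of the configuration [C^w_i] that
   Verifier claims a cell of; [Trip] states carry it before the decrement. *)
Definition winning_region (x : gconf Q) : Prop :=
  match x with
  | (Cell j d, c) => true_cell c j d
  | (Trip j (a, b, e), c) =>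
      [/\ 1 <= j <= N, 0 < c, true_cell c.-1 j.-1 a, true_cell c.-1 j b
        & true_cell c.-1 j.+1 e]
  | (sz', c) => c = 0
  | (sF', _) => True
  | _ => False
  end.

Definition false_cell (c j : nat) (d : Delta Q) : Prop :=
  ~ true_cell c j d /\ exists C, cw c = Some C.

Definition losing_region (x : gconf Q) : Prop :=
  match x with
  | (Cell j d, c) => false_cell c j d
  | (Trip j (a, b, e), c) => (exists C, cw c = Some C) /\
      [\/ c = 0, false_cell c.-1 j.-1 a, false_cell c.-1 j b | false_cell c.-1 j.+1 e]
  | (sz', c) => 0 < c
  | (sr', _) => True
  | _ => False
  end.

Lemma winning_region_wins x : winning_region x -> wins x.
Proof.
apply: VerifierWins_of_invariant.
- by move=> [[j d|j [[a b] e]| | | |] c].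
- move=> [[j d|j [[a b] e]| | | |] c] //= hW _ _.
  case: hW => [[hj [C [E e]]] | [hb [ea | [-> e]]]].
  + case: c E => [|c] E.
      exists (sz' Q, 0); split=> //; exists WZero; split=> //=.
      by apply: e_init; [lia | move: E => /= [eC]; rewrite -e -eC].
    have [m' [hr eC]] := Cw_Some E; subst C.
    have [a [b [e' [P ta tb te]]]] := Pre_true_cells hr hj.
    exists (Trip j (a, b, e'), c.+1); split=> //.
    by exists WZero; split=> //=; apply: e_pre; rewrite // -e.
  + by exists (sF' Q, c); split=> //; exists WZero; split=> //=; rewrite ea; apply: e_bnd_acc.
  + exists (sz' Q, 0); split=> //; exists WZero; split=> //=.
    by apply: e_init => //; case: hb => ->; lia.
- move=> [[j d|j [[a b] e]| | | |] c] //= hW _ _.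
  + case: hW => hj hc ta tb te; split.
      by exists (Cell j b, c.-1), WDec; split; [exact: e_mid | split].
    move=> [s c'] [wt [/= E U]].
    have [ewt _ hs] := edge_Trip_inv E; subst wt.
    by case: U => _ ->; case: hs => ->.
  + subst c; split; first by exists (sF' Q, 0), WZero; split=> //; exact: e_z_F.
    move=> [s c'] [wt [/= E U]].
    by case: (edge_sz_inv E) => [[_ ->] | [ewt ->]] //; subst wt; case: U.
Qed.

Lemma losing_region_loses x : losing_region x -> ~ wins x.
Proof.
apply: not_VerifierWins_of_invariant.
- by move=> [[j d|j [[a b] e]| | | |] c].
- move=> [[j d|j [[a b] e]| | | |] c] //= [ntrue [C hC]] _ [s c'] [wt [/= E U]].
  case: (edge_Cell_inv E) =>
    [[[[a b] e] [ewt -> hj P]] | [ewt -> hb ea] | [ewt -> _] | [ewt -> hj ec]];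
    subst wt; rewrite /= in U; subst c' => //=.
  + split; first by exists C.
    case: (posnP c) => [-> | c_gt0]; first by constructor 1.
    apply: NNPP => H; apply: ntrue; left; split=> //; exists C; split=> //.
    have [m' [hr eC]] := Cw_Some hC; subst C.
    have hr' : run c.-1.+1 = Some m' by rewrite prednK.
    have true_of k t : ~ false_cell c.-1 k t -> true_cell c.-1 k t.
      have [m [hm _]] := mrunS_Some hr'.
      by move=> nf; apply: NNPP => nt; apply: nf; split=> //; exists (conf_of m); rewrite /Cw hm.
    apply: (true_cells_Pre hr' hj _ _ _ P); apply: true_of => f; apply: H;
      [by constructor 2 | by constructor 3 | by constructor 4].
  + by apply: ntrue; right; split=> //; left.
  + case: (posnP c) => // c0; exfalso; apply: ntrue; subst c.
    have [hb | hin] : (j = 0 \/ j = N.+1) \/ 1 <= j <= N by lia.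
      by right; split => //; right.
    by left; split => //; exists (C0 q0 w N).
- move=> [[j d|j [[a b] e]| | | |] c] //= hL _.
  + case: hL => _ hc [[s c'] [wt [/= E U]]].
    have [ewt hj _] := edge_Trip_inv E; subst wt.
    case: U => c_gt0 _.
    case: hc => [c0 | la | lb | le]; first lia.
    * by exists (Cell j.-1 a, c.-1); split=> //; exists WDec; split=> //=; exact: e_left.
    * by exists (Cell j b, c.-1); split=> //; exists WDec; split=> //=; exact: e_mid.
    * by exists (Cell j.+1 e, c.-1); split=> //; exists WDec; split=> //=; exact: e_right.
  + by move=> _; exists (sr' Q, c.-1); split=> //; exists WDec; split=> //=; exact: e_z_r.
  + by move=> [[s c'] [wt [/= E _]]]; inversion E.
Qed.

Lemma VerifierWins_CellE j d i C :
  1 <= j <= N -> cw i = Some C -> wins (Cell j d, i) <-> C j = d.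
Proof.
move=> hj hC; split=> [hw | e]; last first.
  by apply: winning_region_wins; left; split=> //; exists C.
apply: NNPP => ne; apply: (@losing_region_loses (Cell j d, i)) hw.
split; last by exists C.
case=> [[_ [C' [hC' e]]] | [hb _]]; last lia.
by apply: ne; move: hC'; rewrite hC => -[->].
Qed.

Hypothesis accept_at_1 : forall i m, run i = Some m -> mtape m (mhead m) = Sa ->
  mstate m = qF /\ mhead m = 1.

Lemma Cw_accepts_at i C : cw i = Some C -> C 1 = inr (qF, Sa) <-> accepts_at q0 delta w N i.
Proof.
move=> /Cw_Some [m [hr ->]]; split.
- by rewrite /conf_of; case: eqP => // h1 [_ hSa]; exists m; rewrite -h1.
- move=> [m' [hr' hSa]]; move: hr'; rewrite hr => -[em]; subst m'.
  have [hq h1] := accept_at_1 hr hSa.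
  by rewrite /conf_of h1 eqxx hq -h1 hSa.
Qed.

End Game.

Theorem mainTheorem6 (Q : finType) (q0 qF : Q) (delta : Q -> Sym -> Q * Sym * Dir)
  (w : seq bool) (k : nat) :
  let N := 2 ^ (2 ^ (size w ^ k)) in
  (* T uses only the cells 1, ..., N *)
  (forall i m, mrun q0 delta w N i = Some m -> 1 <= mhead m <= N) ->
  (* if T halts accepting, it does so in state q_F with the head on cell 1 *)
  (forall i m, mrun q0 delta w N i = Some m -> mtape m (mhead m) = Sa ->
     mstate m = qF /\ mhead m = 1) ->
  (forall (j : nat) (d : Delta Q) (i : nat) (C : nat -> Delta Q),
     1 <= j <= N -> Cw q0 delta w N i = Some C ->
     (VerifierWins q0 qF delta w N (Cell j d, i) <-> C j = d)) /\
  (forall (i : nat) (C : nat -> Delta Q),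
     Cw q0 delta w N i = Some C ->
     (VerifierWins q0 qF delta w N (Cell 1 (inr (qF, Sa)), i) <-> C 1 = inr (qF, Sa)) /\
     (C 1 = inr (qF, Sa) <-> accepts_at q0 delta w N i)).
Proof.
move=> N head_inside accept_at_1.
have cellE := VerifierWins_CellE qF head_inside.
split=> [j d i C | i C hC]; first exact: cellE.
split; last exact: (Cw_accepts_at accept_at_1 hC).
by apply: cellE hC; have := N_gt0 head_inside; lia.
Qed.
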